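(* Consider the energy-efficiency maximization problem (P1) described in the context. The maximum of the system energy efficiency $\eta_{EE}$ over the feasible set of (P1) can always be obtained when each wireless device performs local computation during the whole time block, i.e., with execution times $\tau_k^* = T$ for all $k\in\{1,\dots,K\}$.
   Context: System: one power beacon (PB) with transmit power $P_0\ge 0$, one MEC server, a reconfigurable intelligent surface (RIS) with $N$ elements, and $K$ wireless devices (WDs), all nodes single-antenna. Given channels $g_{\mathrm{PU},k}\in\mathbb{C}$, $\mathbf{g}_{\mathrm{PI}},\mathbf{g}_{\mathrm{IU},k}\in\mathbb{C}^{N}$, $h_{\mathrm{UM},k}\in\mathbb{C}$, $\mathbf{h}_{\mathrm{UI},k},\mathbf{h}_{\mathrm{IM}}\in\mathbb{C}^{N}$. For phases $\boldsymbol\theta=(\theta_1,\dots,\theta_N)$ let $\boldsymbol\Theta=\mathrm{diag}(e^{j\theta_1},\dots,e^{j\theta_N})$ and $g_k=g_{\mathrm{PU},k}+\mathbf{g}_{\mathrm{PI}}^H\boldsymbol\Theta\mathbf{g}_{\mathrm{IU},k}$, $h_k=h_{\mathrm{UM},k}+\mathbf{h}_{\mathrm{UI},k}^H\boldsymbol\Theta\mathbf{h}_{\mathrm{IM}}$. Optimization variables: backscatter times $t^b_k\ge0$, active-transmission times $t^o_k\ge0$, backscattering coefficients $\rho_k\in[0,1]$, PB power $P_0\le P_{\max}$, WD transmit powers $p_k\ge0$, execution times $0\le\tau_k\le T$, CPU frequencies $0\le f_k\le f_{\max}$, and phases $\theta_n$ (unit-modulus reflection). Positive constants: $T,\sigma^2,\zeta,C_{\mathrm{cpu}},\epsilon_k,\delta,P_{c,k},p_{c,k},a_k,b_k,c_k$,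 $Q_k\ge0$, $\gamma_{\min,k}$. Throughputs: $\Gamma^b_k=t^b_k\log_2\!\big(1+\zeta\rho_kP_0|h_k|^2|g_k|^2/\sigma^2\big)$, $\Gamma^o_k=t^o_k\log_2\!\big(1+p_k|h_k|^2/\sigma^2\big)$, $\Gamma_k=\tau_kf_k/C_{\mathrm{cpu}}$, $R_{\mathrm{sum}}=\sum_{k=1}^K(\Gamma^b_k+\Gamma^o_k+\Gamma_k)$. Energies: $E_{1,k}=P_{c,k}t^b_k$, $E_{2,k}=\frac{p_k}{\delta}t^o_k+p_{c,k}t^o_k+\epsilon_kf_k^3\tau_k$, $E_{\mathrm{total}}=\sum_k(E_{1,k}+E_{2,k})$. Harvested energy: $E^b_k=\Big(\frac{a_k(1-\rho_k)P_0|g_k|^2+b_k}{(1-\rho_k)P_0|g_k|^2+c_k}-\frac{b_k}{c_k}\Big)t^b_k$, $P^b_k=\frac{a_kP_0|g_k|^2+b_k}{P_0|g_k|^2+c_k}-\frac{b_k}{c_k}$, $E^t_k=E^b_k+\sum_{i\ne k}P^b_kt^b_i$. Problem (P1): maximize $\eta_{EE}=R_{\mathrm{sum}}/E_{\mathrm{total}}$ over all the variables subject to: $\Gamma^b_k+\Gamma^o_k+\Gamma_k\ge\gamma_{\min,k}$ for all $k$; $E_{1,k}+E_{2,k}\le E^t_k+Q_k$ for all $k$; $\sum_{k=1}^K(t^b_k+t^o_k)\le T$ and $0\le\tau_k\le T$; $0\le f_k\le f_{\max}$; $0\le\rho_k\le1$; $P_0\le P_{\max}$; $|e^{j\theta_n}|=1$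 for all $n$; $p_k,t^b_k,t^o_k\ge0$. *)

From Stdlib Require Import Reals.
From Coquelicot Require Import Coquelicot.
Open Scope R_scope.

Fixpoint sumR (n : nat) (f : nat -> R) : R :=
  match n with
  | O => 0
  | S m => sumR m f + f m
  end.

Definition log2 (x : R) : R := ln x / ln 2.

Definition cexpj (th : R) : C := (cos th, sin th).

(* Hermitian inner product  a^H Theta b = sum_n conj(a_n) e^{j th_n} b_n *)
Fixpoint sumC (n : nat) (g : nat -> C) : C :=
  match n with
  | O => RtoC 0
  | S m => Cplus (sumC m g) (g m)
  end.

Definition ris_term (N : nat) (a b : nat -> C) (th : nat -> R) : C :=
  sumC N (fun n => Cmult (Cmult (Cconj (a n)) (cexpj (th n))) (b n)).

(* System data: number of RIS elements N, number of WDs K (indices 0..K-1),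
   channels and constants. Vectors in C^N are functions nat -> C on 0..N-1. *)
Record SysParams := {
  N : nat;
  K : nat;
  gPU : nat -> C;
  gPI : nat -> C;
  gIU : nat -> nat -> C;     (* g_{IU,k} (entry n) : gIU k n *)
  hUM : nat -> C;
  hUI : nat -> nat -> C;     (* h_{UI,k} (entry n) : hUI k n *)
  hIM : nat -> C;
  Tblk : R; sigma2 : R; zeta : R; Ccpu : R; delta : R;
  eps : nat -> R; Pc : nat -> R; pc : nat -> R;
  a : nat -> R; b : nat -> R; c : nat -> R;
  Q : nat -> R; gmin : nat -> R;
  Pmax : R; fmax : R
}.

Definition params_ok (s : SysParams) : Prop :=
  0 < Tblk s /\ 0 < sigma2 s /\ 0 < zeta s /\ 0 < Ccpu s /\ 0 < delta s /\
  (forall k, (k < K s)%nat ->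
     0 < eps s k /\ 0 < Pc s k /\ 0 < pc s k /\ 0 < a s k /\ 0 < b s k /\
     0 < c s k /\ 0 <= Q s k /\ 0 < gmin s k).

Record Vars := {
  tb : nat -> R;
  to : nat -> R;
  rho : nat -> R;
  P0 : R;
  p : nat -> R;
  tau : nat -> R;
  f : nat -> R;
  theta : nat -> R
}.

Definition gk (s : SysParams) (v : Vars) (k : nat) : C :=
  Cplus (gPU s k) (ris_term (N s) (gPI s) (gIU s k) (theta v)).
Definition hk (s : SysParams) (v : Vars) (k : nat) : C :=
  Cplus (hUM s k) (ris_term (N s) (hUI s k) (hIM s) (theta v)).

Definition G2 s v k := (Cmod (gk s v k)) ^ 2.
Definition H2 s v k := (Cmod (hk s v k)) ^ 2.

Definition Gam_b s v k :=
  tb v k * log2 (1 + zeta s * rho v k * P0 v * H2 s v k * G2 s v k / sigma2 s).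
Definition Gam_o s v k :=
  to v k * log2 (1 + p v k * H2 s v k / sigma2 s).
Definition Gam_l s v k := tau v k * f v k / Ccpu s.
Definition Gam s v k := Gam_b s v k + Gam_o s v k + Gam_l s v k.

Definition Rsum s v := sumR (K s) (Gam s v).

Definition E1 s v k := Pc s k * tb v k.
Definition E2 s v k :=
  p v k / delta s * to v k + pc s k * to v k + eps s k * f v k ^ 3 * tau v k.
Definition Etotal s v := sumR (K s) (fun k => E1 s v k + E2 s v k).

Definition Eb s v k :=
  ((a s k * (1 - rho v k) * P0 v * G2 s v k + b s k) /
     ((1 - rho v k) * P0 v * G2 s v k + c s k) - b s k / c s k) * tb v k.
Definition Pb s v k :=
  (a s k * P0 v * G2 s v k + b s k) / (P0 v * G2 s v k + c s k) - b s k / c s k.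
Definition Et s v k :=
  Eb s v k + sumR (K s) (fun i => if Nat.eqb i k then 0 else Pb s v k * tb v i).

Definition EE s v := Rsum s v / Etotal s v.

(* feasible set of (P1); |e^{j theta_n}| = 1 holds by construction of cexpj *)
Definition feasible (s : SysParams) (v : Vars) : Prop :=
  (forall k, (k < K s)%nat ->
     Gam s v k >= gmin s k /\
     E1 s v k + E2 s v k <= Et s v k + Q s k /\
     0 <= tau v k <= Tblk s /\
     0 <= f v k <= fmax s /\
     0 <= rho v k <= 1 /\
     0 <= p v k /\ 0 <= tb v k /\ 0 <= to v k) /\
  sumR (K s) (fun k => tb v k + to v k) <= Tblk s /\
  0 <= P0 v <= Pmax s.

From Pilot Require Import Defs.
From Stdlib Require Import Reals Lra Psatz.
From Coquelicot Require Import Coquelicot.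
Open Scope R_scope.

(* The execution time tau_k enters (P1) only through the computed bits
   tau_k f_k / C_cpu and the computing energy eps_k f_k^3 tau_k.  Replacing
   (tau_k, f_k) by (T, r f_k) with r = (tau_k / T)^(1/3) in [0, 1] keeps the
   energy eps_k f_k^3 tau_k = eps_k (r f_k)^3 T, so E_total and every energy
   constraint are untouched, while the computed bits grow from r^3 T f_k to
   r T f_k.  Hence R_sum, and with it eta_EE, does not decrease. *)

(* [Rpower 0 y = 1] because [ln 0 = 0], hence the separate case [x <= 0]. *)
Definition cube_root (x : R) : R :=
  if Rle_dec x 0 then 0 else Rpower x (1 / 3).

Lemma cube_root_nonneg (x : R) : 0 <= cube_root x.
Proof.
  unfold cube_root; destruct (Rle_dec x 0); [lra |].
  left; apply exp_pos.
Qed.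

Lemma cube_root_cube (x : R) : 0 <= x -> cube_root x ^ 3 = x.
Proof.
  intros Hx; unfold cube_root; destruct (Rle_dec x 0) as [Hle | Hgt].
  - replace x with 0 by lra; ring.
  - rewrite <- Rpower_pow by (apply exp_pos).
    rewrite Rpower_mult.
    replace (1 / 3 * INR 3) with 1 by (simpl; field).
    apply Rpower_1; lra.
Qed.

Lemma cube_root_le1 (x : R) : x <= 1 -> cube_root x <= 1.
Proof.
  intros Hx1.
  destruct (Rle_dec x 0) as [Hle | Hgt].
  - unfold cube_root; destruct (Rle_dec x 0); [lra | contradiction].
  - pose proof (cube_root_cube x ltac:(lra)) as Hcube.
    pose proof (cube_root_nonneg x).
    nra.
Qed.

Lemma pow3_le_self (r : R) : 0 <= r <= 1 -> r ^ 3 <= r.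
Proof. intros; nra. Qed.

(* Also for [d = 0], where both sides are [0] since [/ 0 = 0]. *)
Lemma Rdiv_le_compat_r (x y d : R) : 0 <= d -> x <= y -> x / d <= y / d.
Proof.
  intros Hd Hxy; unfold Rdiv.
  apply Rmult_le_compat_r; [| exact Hxy].
  destruct Hd as [Hd | <-]; [left; apply Rinv_0_lt_compat, Hd | rewrite Rinv_0; lra].
Qed.

Lemma sumR_ext (n : nat) (u w : nat -> R) :
  (forall k, (k < n)%nat -> u k = w k) -> sumR n u = sumR n w.
Proof.
  induction n as [| n IH]; simpl; intros Huw; [reflexivity |].
  f_equal; [apply IH; intros |]; apply Huw; lia.
Qed.

Lemma sumR_le (n : nat) (u w : nat -> R) :
  (forall k, (k < n)%nat -> u k <= w k) -> sumR n u <= sumR n w.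
Proof.
  induction n as [| n IH]; simpl; intros Huw; [lra |].
  apply Rplus_le_compat; [apply IH; intros |]; apply Huw; lia.
Qed.

Lemma sumR_nonneg (n : nat) (u : nat -> R) :
  (forall k, (k < n)%nat -> 0 <= u k) -> 0 <= sumR n u.
Proof.
  induction n as [| n IH]; simpl; intros Hu; [lra |].
  apply Rplus_le_le_0_compat; [apply IH; intros |]; apply Hu; lia.
Qed.

Definition stretched_freq (T t fr : R) : R := fr * cube_root (t / T).

Section StretchedExecution.

Variables (T t fr : R).
Hypotheses (HT : 0 < T) (Ht : 0 <= t <= T) (Hfr : 0 <= fr).

Let r := cube_root (t / T).

Let r_unit : 0 <= r <= 1.
Proof.
  split; [apply cube_root_nonneg |].
  apply cube_root_le1.
  apply Rmult_le_reg_r with T; [exact HT |].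
  field_simplify; lra.
Qed.

Let r_cube : r ^ 3 * T = t.
Proof.
  unfold r; rewrite cube_root_cube by (apply Rdiv_le_0_compat; lra).
  field; lra.
Qed.

Lemma stretched_freq_energy : stretched_freq T t fr ^ 3 * T = fr ^ 3 * t.
Proof.
  unfold stretched_freq; fold r; rewrite <- r_cube; ring.
Qed.

Lemma stretched_freq_cycles : t * fr <= T * stretched_freq T t fr.
Proof.
  unfold stretched_freq; fold r; rewrite <- r_cube.
  pose proof (pow3_le_self r r_unit).
  assert (0 <= (r - r ^ 3) * (T * fr)) by (apply Rmult_le_pos; nra).
  lra.
Qed.

Lemma stretched_freq_range : 0 <= stretched_freq T t fr <= fr.
Proof.
  unfold stretched_freq; fold r.
  pose proof r_unit; split; nra.
Qed.

End StretchedExecution.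

(* Coquelicot exports its own [f] and [E1], hence the qualified [Defs.f] and
   [Defs.E1]. *)
Definition full_time_vars (s : SysParams) (v : Vars) : Vars :=
  {| tb := tb v; to := to v; rho := rho v; P0 := P0 v; p := p v;
     tau := fun _ => Tblk s;
     Defs.f := fun k => stretched_freq (Tblk s) (tau v k) (Defs.f v k);
     theta := theta v |}.

Section FullTime.

Variables (s : SysParams) (v : Vars).
Hypotheses (HT : 0 < Tblk s) (Hv : feasible s v).

Let v' := full_time_vars s v.

Let exec_ok k : (k < K s)%nat -> 0 <= tau v k <= Tblk s /\ 0 <= Defs.f v k <= fmax s.
Proof. intros Hk; destruct Hv as [Hall _]; specialize (Hall k Hk); tauto. Qed.

Lemma full_time_energy k : (k < K s)%nat ->
  Defs.E1 s v' k + E2 s v' k = Defs.E1 s v k + E2 s v k.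
Proof.
  intros Hk; destruct (exec_ok k Hk) as [Ht _].
  unfold Defs.E1, E2; cbn -[pow stretched_freq].
  rewrite !Rmult_assoc, (stretched_freq_energy _ _ _ HT Ht); reflexivity.
Qed.

Lemma full_time_throughput k : 0 < Ccpu s -> (k < K s)%nat ->
  Gam s v k <= Gam s v' k.
Proof.
  intros HC Hk; destruct (exec_ok k Hk) as [Ht Hf].
  unfold Gam, Gam_l; simpl.
  apply Rplus_le_compat_l, Rdiv_le_compat_r; [lra |].
  apply stretched_freq_cycles; lra.
Qed.

Lemma full_time_Etotal : Etotal s v' = Etotal s v.
Proof. apply sumR_ext, full_time_energy. Qed.

Lemma full_time_Rsum : 0 < Ccpu s -> Rsum s v <= Rsum s v'.
Proof. intros HC; apply sumR_le; intros k; apply full_time_throughput, HC. Qed.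

Lemma full_time_feasible : 0 < Ccpu s -> feasible s v'.
Proof.
  intros HC; destruct Hv as [Hall [Hsum HP0]].
  split; [| split; assumption].
  intros k Hk.
  pose proof (full_time_throughput k HC Hk) as Hgam.
  pose proof (full_time_energy k Hk) as Henergy.
  destruct (exec_ok k Hk) as [Ht Hf].
  pose proof (stretched_freq_range (Tblk s) (tau v k) (Defs.f v k) HT Ht ltac:(lra)).
  destruct (Hall k Hk) as (Hg & HE & _ & _ & Hrest).
  change (Et s v' k) with (Et s v k).
  repeat split; simpl; try lra; tauto.
Qed.

End FullTime.

Lemma Etotal_nonneg (s : SysParams) (v : Vars) :
  params_ok s -> feasible s v -> 0 <= Etotal s v.
Proof.
  intros (_ & _ & _ & _ & Hd & Hks) [Hall _].
  apply sumR_nonneg; intros k Hk.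
  destruct (Hks k Hk) as (He & HPc & Hpc & _).
  destruct (Hall k Hk) as (_ & _ & Ht & Hf & _ & Hp & Htb & Hto).
  unfold Defs.E1, E2.
  pose proof (Rdiv_le_0_compat (p v k) (delta s) ltac:(lra) Hd).
  pose proof (pow_le (Defs.f v k) 3 ltac:(lra)).
  assert (0 <= eps s k * Defs.f v k ^ 3) by nra.
  nra.
Qed.

Theorem proposition1 (s : SysParams) (Hs : params_ok s) (v : Vars) :
  feasible s v ->
  exists v' : Vars,
    feasible s v' /\
    (forall k, (k < K s)%nat -> tau v' k = Tblk s) /\
    EE s v <= EE s v'.
Proof.
  intros Hv.
  pose proof Hs as (HT & _ & _ & HC & _).
  exists (full_time_vars s v); split; [| split].
  - exact (full_time_feasible s v HT Hv HC).
  - reflexivity.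
  - unfold EE; rewrite (full_time_Etotal s v HT Hv).
    apply Rdiv_le_compat_r; [exact (Etotal_nonneg s v Hs Hv) |].
    exact (full_time_Rsum s v HT Hv HC).
Qed.
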